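(* Let $n\ge2$, let $\mathbb S^n\subset\mathbb R^{n+1}$ be the unit sphere and fix $p\in\mathbb S^n$. Let $a\in C^0([0,\infty))\cap C^\infty((0,\infty))$ satisfy $a(0)=0$, $a(t)=\dfrac{\sin(\log(\log(e/t)))}{1+\log(\log(e/t))}$ for $t\in(0,1]$, and $a(t)=0$ for $t\ge3/2$. Define $\phi:\mathbb S^n\to\mathbb R^{n+1}$ by $\phi(x)=\big(1+\tfrac12 a(|x-p|)\big)x$ and $Y=\phi(\mathbb S^n)$ (note $p\in Y$). If $k\geq 1$ and $f:\mathbb S^k\to Y$ is Lipschitz continuous (with respect to the Euclidean metric on $Y\subset\mathbb R^{n+1}$), then either $f(\mathbb S^k)=\{p\}$ or $p\notin f(\mathbb S^k)$. *)

From HB Require Import structures.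
From mathcomp Require Import all_boot all_order all_algebra.
From mathcomp Require Import all_classical all_reals all_analysis.
Set Implicit Arguments. Unset Strict Implicit. Unset Printing Implicit Defensive.
Import Order.TTheory GRing.Theory Num.Theory.
Local Open Scope ring_scope.

Definition enorm {R : realType} {m : nat} (x : 'rV[R]_m) : R :=
  Num.sqrt (\sum_(i < m) (x ord0 i) ^+ 2).

(* The unit sphere S^(m-1) in R^m (so S^n = unit_sphere (n.+1)). *)
Definition unit_sphere {R : realType} {m : nat} : set 'rV[R]_m :=
  [set x | enorm x = 1].

Definition smooth_pos {R : realType} (a : R -> R) : Prop :=
  forall (k : nat) (t : R), 0 < t -> derivable (derive1n k a) t 1.

Definition phi_map {R : realType} {m : nat} (a : R -> R) (p x : 'rV[R]_m)
  : 'rV[R]_m := (1 + a (enorm (x - p)) / 2) *: x.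

Definition euclid_lipschitz_on {R : realType} {m k : nat} (A : set 'rV[R]_k)
  (f : 'rV[R]_k -> 'rV[R]_m) : Prop :=
  exists L : R, forall x y, A x -> A y -> enorm (f x - f y) <= L * enorm (x - y).

From HB Require Import structures.
From mathcomp Require Import all_boot all_order all_algebra.
From mathcomp Require Import all_classical all_reals all_analysis.
From mathcomp Require Import ring lra.
Import Order.TTheory GRing.Theory Num.Theory numFieldNormedType.Exports.
Local Open Scope classical_set_scope.
Local Open Scope ring_scope.

(* Near p the set Y is the radial graph r = 1 + a(|y - p|)/2 over the sphere,
   so along a Lipschitz path in Y leaving p both the angular distance
   T = |F/|F| - p| and the radius |F| = 1 + a(T)/2 are Lipschitz.  At the
   levels tau_j, where log log(e/t) = pi/2 + j pi, a takes the values
   (-1)^j/(1 + pi/2 + j pi), so consecutive values of the radius at the first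
   times s_j at which T reaches tau_j differ by about 1/j.  The s_j decrease,
   so the Lipschitz bound on the radius would make the partial sums of the
   harmonic series bounded by a multiple of s_1.  A Lipschitz map from S^k meeting p is turned into such
   a path by composing it with a great-circle arc, which exists between any two
   non-antipodal points; antipodal points are handled through a third point,
   which exists because k >= 1. *)

Section Euclid.
Context {R : realType} {m : nat}.
Implicit Types x y z : 'rV[R]_m.

Definition dot x y : R := \sum_(i < m) x ord0 i * y ord0 i.

Definition normalize x := (enorm x)^-1 *: x.

Lemma dot_ge0 x : 0 <= dot x x.
Proof. by apply: sumr_ge0 => i _; rewrite -expr2 sqr_ge0. Qed.

Lemma dot_eq0 x : dot x x = 0 -> x = 0.
Proof.
move/eqP; rewrite psumr_eq0; last by move=> i _; rewrite -expr2 sqr_ge0.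
move=> /allP x0; apply/rowP => i; rewrite mxE.
by have := x0 i (mem_index_enum _); rewrite /= mulf_eq0 orbb => /eqP.
Qed.

Lemma enorm_sqr x : enorm x ^+ 2 = dot x x.
Proof. exact/sqr_sqrtr/dot_ge0. Qed.

Lemma enorm_ge0 x : 0 <= enorm x.
Proof. exact: sqrtr_ge0. Qed.

Lemma enorm_eq0 x : enorm x = 0 -> x = 0.
Proof. by move=> x0; apply: dot_eq0; rewrite -enorm_sqr x0 expr0n. Qed.

Lemma enorm0 : enorm (0 : 'rV[R]_m) = 0.
Proof. by rewrite /enorm big1 ?sqrtr0 // => i _; rewrite mxE expr0n. Qed.

Lemma enormZ (c : R) x : enorm (c *: x) = `|c| * enorm x.
Proof.
rewrite /enorm -sqrtr_sqr -sqrtrM ?sqr_ge0 // mulr_sumr.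
by congr Num.sqrt; apply: eq_bigr => i _; rewrite mxE exprMn.
Qed.

Lemma enormN x : enorm (- x) = enorm x.
Proof. by rewrite -scaleN1r enormZ normrN normr1 mul1r. Qed.

Lemma dot_comb z (b c : R) x y :
  (forall i, z ord0 i = b * x ord0 i + c * y ord0 i) ->
  dot z z = b ^+ 2 * dot x x + 2 * b * c * dot x y + c ^+ 2 * dot y y.
Proof.
move=> hz; rewrite /dot !mulr_sumr -!big_split /=.
by apply: eq_bigr => i _; rewrite hz; ring.
Qed.

Lemma enorm_sqr_comb z (b c : R) x y :
  (forall i, z ord0 i = b * x ord0 i + c * y ord0 i) ->
  enorm z ^+ 2 =
    b ^+ 2 * enorm x ^+ 2 + 2 * b * c * dot x y + c ^+ 2 * enorm y ^+ 2.
Proof. by move=> hz; rewrite !enorm_sqr (dot_comb _ _ _ _ _ hz). Qed.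

Lemma cauchy_schwarz x y : dot x y ^+ 2 <= dot x x * dot y y.
Proof.
have [Y0|Yneq0] := eqVneq (dot y y) 0.
  have -> : dot x y = 0.
    by rewrite (dot_eq0 y Y0) /dot big1 // => i _; rewrite mxE mulr0.
  by rewrite Y0 expr0n mulr0.
set X := dot x x; set Y := dot y y; set P := dot x y.
have Ygt0 : 0 < Y by rewrite lt_def Yneq0 dot_ge0.
have := dot_ge0 (Y *: x - P *: y).
rewrite (dot_comb _ Y (- P) x y); last by move=> i; rewrite !mxE; ring.
rewrite -/X -/Y -/P => h.
have : 0 <= Y * (X * Y - P ^+ 2) by rewrite mulrBr; lra.
by rewrite pmulr_rge0 // subr_ge0.
Qed.

Lemma dot_le_enorm x y : dot x y <= enorm x * enorm y.
Proof.
have nxy_ge0 : 0 <= enorm x * enorm y by rewrite mulr_ge0 ?enorm_ge0.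
have [dxy_le0|dxy_gt0] := lerP (dot x y) 0; first exact: le_trans nxy_ge0.
rewrite -ler_sqr ?nnegrE ?(ltW dxy_gt0) // exprMn !enorm_sqr.
exact: cauchy_schwarz.
Qed.

Lemma enormD x y : enorm (x + y) <= enorm x + enorm y.
Proof.
rewrite -ler_sqr ?nnegrE ?addr_ge0 ?enorm_ge0 //.
rewrite (enorm_sqr_comb (x + y) 1 1 x y); last by move=> i; rewrite !mxE; ring.
have := dot_le_enorm x y; nra.
Qed.

Lemma enormB x y : enorm (x - y) <= enorm x + enorm y.
Proof. by rewrite -(enormN y) enormD. Qed.

Lemma enorm_dist_dist x y : `|enorm x - enorm y| <= enorm (x - y).
Proof.
rewrite ler_norml; apply/andP; split.
  by have := enormD (y - x) x; rewrite subrK -[enorm (y - x)]enormN opprB; lra.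
by have := enormD (x - y) y; rewrite subrK; lra.
Qed.

Lemma enorm_normalize x : x != 0 -> enorm (normalize x) = 1.
Proof.
move=> xneq0; have nx_gt0 : 0 < enorm x.
  by rewrite lt_def enorm_ge0 andbT; apply: contra xneq0 => /eqP/enorm_eq0->.
by rewrite enormZ ger0_norm ?invr_ge0 ?ltW // mulVf // gt_eqF.
Qed.

Lemma normalize_lipschitz x y (c : R) : 0 < c -> c <= enorm x -> c <= enorm y ->
  enorm (normalize x - normalize y) <= 2 / c * enorm (x - y).
Proof.
move=> c_gt0 cx cy.
have nx_gt0 : 0 < enorm x by apply: lt_le_trans cx.
have ny_gt0 : 0 < enorm y by apply: lt_le_trans cy.
have -> : normalize x - normalize y =
    (enorm x)^-1 *: (x - y) + ((enorm x)^-1 - (enorm y)^-1) *: y.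
  by rewrite /normalize scalerBr scalerBl addrA subrK.
apply: le_trans (enormD _ _) _; rewrite !enormZ.
set X := enorm x; set Y := enorm y; set D := enorm (x - y).
have YXD : `|Y - X| <= D by rewrite distrC; apply: enorm_dist_dist.
have -> : X^-1 - Y^-1 = (Y - X) / X * Y^-1 by field; rewrite ?gt_eqF.
have iX : 0 <= X^-1 by rewrite invr_ge0 ltW.
have iY : 0 <= Y^-1 by rewrite invr_ge0 ltW.
have -> : `|X^-1| * D + `|(Y - X) / X / Y| * Y = (D + `|Y - X|) / X.
  by rewrite !normrM !(ger0_norm iX) (ger0_norm iY); field; rewrite !gt_eqF.
have -> : 2 / c * D = 2 * D * (X / c) / X by field; rewrite !gt_eqF.
rewrite ler_pM2r ?invr_gt0 //.
have : 1 <= X / c by rewrite ler_pdivlMr // mul1r.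
have := enorm_ge0 (x - y); rewrite -/D; nra.
Qed.

(* The normalized chord from x0 to x1: a great-circle arc. *)
Lemma sphere_arc_lipschitz x0 x1 :
  enorm x0 = 1 -> enorm x1 = 1 -> x0 + x1 != 0 ->
  exists g : R -> 'rV[R]_m, exists2 K : R, 0 <= K &
    [/\ g 0 = x0, g 1 = x1, (forall s, 0 <= s <= 1 -> enorm (g s) = 1) &
        forall s s', 0 <= s <= 1 -> 0 <= s' <= 1 ->
          enorm (g s - g s') <= K * `|s - s'|].
Proof.
move=> nx0 nx1 x01; set d := dot x0 x1.
have d_le1 : d <= 1 by have := dot_le_enorm x0 x1; rewrite nx0 nx1 mulr1.
have d_gtN1 : 0 < 1 + d.
  have := enorm_sqr_comb (x0 + x1) 1 1 x0 x1
    ltac:(by move=> i; rewrite !mxE; ring).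
  have : 0 < enorm (x0 + x1) by rewrite lt_def enorm_ge0 andbT;
    apply: contra x01 => /eqP/enorm_eq0->.
  by rewrite nx0 nx1 -/d; nra.
pose u s : 'rV[R]_m := (1 - s) *: x0 + s *: x1.
set c := Num.sqrt ((1 + d) / 2).
have c_gt0 : 0 < c by rewrite sqrtr_gt0; lra.
have cu s : 0 <= s <= 1 -> c <= enorm (u s).
  move=> /andP[s_ge0 s_le1].
  rewrite -ler_sqr ?nnegrE ?enorm_ge0 ?(ltW c_gt0) // sqr_sqrtr; last lra.
  rewrite (enorm_sqr_comb _ (1 - s) s x0 x1); last by move=> i; rewrite !mxE.
  rewrite nx0 nx1 -/d expr1n !mulr1.
  have -> : (1 - s) ^+ 2 + 2 * (1 - s) * s * d + s ^+ 2 =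
      (1 + d) / 2 + (1 - d) * (1 - 2 * s) ^+ 2 / 2 by field.
  by rewrite lerDl; apply/divr_ge0/ler0n/mulr_ge0/sqr_ge0; rewrite subr_ge0.
have u_neq0 s : 0 <= s <= 1 -> u s != 0.
  by move=> /cu cus; apply/eqP => u0; move: cus; rewrite u0 enorm0; lra.
exists (fun s => normalize (u s)), (2 / c * 2).
  by rewrite mulr_ge0 ?divr_ge0 ?(ltW c_gt0).
split.
- by rewrite /u subr0 scale1r scale0r addr0 /normalize nx0 invr1 scale1r.
- by rewrite /u subrr scale0r scale1r add0r /normalize nx1 invr1 scale1r.
- by move=> s /u_neq0; apply: enorm_normalize.
move=> s s' hs hs'.
apply: le_trans (normalize_lipschitz _ _ _ c_gt0 (cu s hs) (cu s' hs')) _.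
have -> : u s - u s' = (s - s') *: (x1 - x0).
  by apply/rowP => i; rewrite !mxE; ring.
rewrite enormZ -(mulrA (2 / c) 2); apply: ler_wpM2l.
  by rewrite divr_ge0 ?(ltW c_gt0).
rewrite mulrC; apply: ler_wpM2r; first exact: normr_ge0.
by have := enormB x1 x0; rewrite nx0 nx1; lra.
Qed.

End Euclid.

Lemma sphere_avoid_pm {R : realType} {m : nat} (x : 'rV[R]_m) : (1 < m)%N ->
  exists z : 'rV[R]_m, [/\ enorm z = 1, z != x & z != - x].
Proof.
move=> m_gt1; pose e i : 'rV[R]_m := \row_j ((j == i)%:R).
have ne i : enorm (e i) = 1.
  rewrite /enorm (bigD1 i) //= big1 ?addr0 ?mxE ?eqxx ?expr1n ?sqrtr1 //.
  by move=> j /negbTE ji; rewrite mxE ji expr0n.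
pose i0 : 'I_m := Ordinal (ltnW m_gt1); pose i1 : 'I_m := Ordinal m_gt1.
have e_pm i : e i = x \/ e i = - x -> e i ord0 i0 ^+ 2 = x ord0 i0 ^+ 2.
  by case=> ->; rewrite ?mxE ?sqrrN.
have [e0x|] := pselect (e i0 = x \/ e i0 = - x); last first.
  by move/not_orP => [/eqP ? /eqP ?]; exists (e i0).
have [e1x|] := pselect (e i1 = x \/ e i1 = - x); last first.
  by move/not_orP => [/eqP ? /eqP ?]; exists (e i1).
have := e_pm _ e0x; rewrite -(e_pm _ e1x) !mxE /=.
by rewrite expr1n expr0n => /eqP; rewrite oner_eq0.
Qed.

Section RealFunctions.
Context {R : realType}.

Lemma lipschitz_first_hit (g : R -> R) (b K v : R) : 0 <= b -> 0 <= K ->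
  (forall s s', 0 <= s <= b -> 0 <= s' <= b -> `|g s - g s'| <= K * `|s - s'|) ->
  g 0 < v -> v <= g b ->
  exists s, [/\ 0 <= s <= b, g s = v & forall s', 0 <= s' < s -> g s' < v].
Proof.
move=> b_ge0 K_ge0 glip g0v vgb.
pose Z := [set s | 0 <= s <= b /\ v <= g s].
have Z_lb0 : lbound Z 0 by move=> s [/andP[]].
have Zb : Z b by split; rewrite ?lexx ?b_ge0.
have Z_lb : has_lbound Z by exists 0.
set S := inf Z.
have S_ge0 : 0 <= S by apply: lb_le_inf => //; exists b.
have S_leb : S <= b by exact: ge_inf.
have hS : 0 <= S <= b by rewrite S_ge0.
have below s' : 0 <= s' < S -> g s' < v.
  move=> /andP[s'_ge0 s'S]; rewrite ltNge; apply/negP => vgs'.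
  have : S <= s'.
    by apply: ge_inf => //; split; rewrite // s'_ge0 (le_trans (ltW s'S)).
  by rewrite leNgt s'S.
have margin w : 0 < w -> K * (w / (K + 1)) < w.
  by move=> w_gt0; rewrite mulrA ltr_pdivrMr; nra.
exists S; split => //; apply/eqP; rewrite eq_le; apply/andP; split.
  rewrite leNgt; apply/negP => vgS.
  have S_gt0 : 0 < S.
    rewrite lt_def S_ge0 andbT; apply: contraTneq vgS => S0.
    by rewrite S0 -leNgt ltW.
  pose d := Num.min S ((g S - v) / (K + 1)).
  have d_gt0 : 0 < d by rewrite lt_min S_gt0 divr_gt0 ?subr_gt0 //; lra.
  have dS : d <= S by rewrite ge_min lexx.
  have dw : d <= (g S - v) / (K + 1) by rewrite ge_min lexx orbT.
  have hSd : 0 <= S - d <= b by apply/andP; split; lra.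
  have := glip S (S - d) hS hSd.
  rewrite subKr (ger0_norm (ltW d_gt0)) ler_norml => /andP[_ gSd].
  have := below (S - d); rewrite subr_ge0 dS /= => /(_ ltac:(lra)).
  have := ler_wpM2l K_ge0 dw.
  by have := margin (g S - v) ltac:(by rewrite subr_gt0); lra.
rewrite leNgt; apply/negP => gSv.
have w_gt0 : 0 < (v - g S) / (K + 1) by rewrite divr_gt0 ?subr_gt0 //; lra.
have [e [/andP[e_ge0 e_leb] vge] eS] :=
  inf_adherent w_gt0 (conj (ex_intro _ b Zb) Z_lb).
have Se : S <= e by apply: ge_inf => //; split; rewrite ?e_ge0.
have := glip e S ltac:(by rewrite e_ge0) hS.
rewrite [`|e - S|]ger0_norm ?subr_ge0 // ler_norml => /andP[_ geS].
have := ler_wpM2l K_ge0 (ltW eS).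
by have := margin (v - g S) ltac:(by rewrite subr_gt0); lra.
Qed.

Lemma harmonic_sum_unbounded (n : nat) (M : R) :
  exists2 J, (n <= J)%N & M < \sum_(n <= i < J) harmonic i.
Proof.
apply: contrapT => noJ.
have sum_le J : (n <= J)%N -> \sum_(n <= i < J) harmonic i <= M.
  by move=> nJ; rewrite leNgt; apply/negP => MJ; apply: noJ; exists J.
have series_nd : {homo series (@harmonic R) : i j / (i <= j)%N >-> i <= j}.
  move=> i j ij; rewrite -subr_ge0 sub_series_geq //.
  by apply: sumr_ge0 => k _; exact: harmonic_ge0.
apply: (@dvg_harmonic R); apply: nondecreasing_is_cvgn => //.
exists (series harmonic n + `|M|) => _ [J _ <-].
have [nJ|Jn] := leqP n J.
  by rewrite -lerBlDl sub_series_geq // (le_trans (sum_le J nJ)) ?ler_norm.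
by rewrite (le_trans (series_nd _ _ (ltnW Jn))) // lerDl.
Qed.

Lemma harmonic_variation_absurd (s u : nat -> R) (n : nat) (b M c : R) : 0 < c ->
  (forall j, (n <= j)%N -> 0 <= s j <= b) ->
  (forall j, (n <= j)%N -> `|u j - u j.+1| <= M * (s j - s j.+1)) ->
  (forall j, (n <= j)%N -> c * harmonic j <= `|u j - u j.+1|) -> False.
Proof.
move=> c_gt0 s_bnd ulip ugap.
have [J nJ] := harmonic_sum_unbounded n (`|M| * b / c).
apply/negP; rewrite -leNgt ler_pdivlMr // mulrC mulr_sumr.
have telescope : s n - s J = \sum_(n <= i < J) (s i - s i.+1).
  rewrite -opprB -telescope_sumr // -sumrN.
  by apply: eq_bigr => i _; rewrite opprB.
apply: (@le_trans _ _ (M * (s n - s J))).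
  rewrite telescope mulr_sumr; apply: ler_sum_nat => i /andP[ni _].
  exact: le_trans (ugap i ni) (ulip i ni).
apply: le_trans (ler_norm _) _; rewrite normrM ler_wpM2l //.
have := s_bnd n (leqnn n); have := s_bnd J nJ.
by move=> /andP[? ?] /andP[? ?]; rewrite ler_norml; apply/andP; split; lra.
Qed.

End RealFunctions.

Lemma lipschitz_path_exit {R : realType} {m : nat} (F : R -> 'rV[R]_m)
    (p : 'rV[R]_m) (M : R) : 0 <= M ->
  (forall s s', 0 <= s <= 1 -> 0 <= s' <= 1 ->
     enorm (F s - F s') <= M * `|s - s'|) ->
  F 0 = p -> F 1 != p -> exists s1, [/\ 0 <= s1 <= 1, F s1 != p &
    forall s, 0 <= s <= s1 -> enorm (F s - p) < 1/2].
Proof.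
move=> M_ge0 Flip F0 F1p; pose D s := enorm (F s - p).
have Dlip s s' : 0 <= s <= 1 -> 0 <= s' <= 1 -> `|D s - D s'| <= M * `|s - s'|.
  move=> hs hs'; apply: le_trans (enorm_dist_dist _ _) _.
  by rewrite opprB addrA subrK; exact: Flip.
have D1 : 0 < D 1.
  rewrite lt_def enorm_ge0 andbT; apply: contra F1p => /eqP/enorm_eq0/eqP.
  by rewrite subr_eq0.
pose rho := Num.min (D 1) (1/4).
have rho_gt0 : 0 < rho by rewrite lt_min D1 /=; lra.
have rho_le : rho <= 1/4 by rewrite ge_min lexx orbT.
have [s1 [hs1 Ds1 before]] := lipschitz_first_hit D 1 M rho ler01 M_ge0 Dlip
  ltac:(by rewrite /D F0 subrr enorm0) ltac:(by rewrite ge_min lexx).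
exists s1; split => //.
  by apply/eqP => Fs1; move: Ds1; rewrite /D Fs1 subrr enorm0; lra.
move=> s /andP[s_ge0 s_le]; have [s_lt|s_ge] := ltrP s s1.
  by have := before s; rewrite s_ge0 s_lt /D => /(_ isT); lra.
have -> : s = s1 by apply/eqP; rewrite eq_le s_le s_ge.
by move: Ds1; rewrite /D; lra.
Qed.

Section Levels.
Context {R : realType}.

(* tau j is the point of (0, 1] at which log (log (e / t)) = theta j. *)
Definition theta (j : nat) : R := pi / 2 + j%:R * pi.
Definition tau (j : nat) : R := expR 1 / expR (expR (theta j)).

Lemma theta_ge0 j : 0 <= theta j.
Proof. by rewrite /theta addr_ge0 ?mulr_ge0 ?divr_ge0 ?pi_ge0. Qed.

Lemma thetaS j : theta j.+1 = theta j + pi.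
Proof. by rewrite /theta -natr1; ring. Qed.

Lemma sin_theta j : sin (theta j) = (-1) ^+ j.
Proof.
elim: j => [|j IH]; first by rewrite /theta mul0r addr0 sin_pihalf expr0.
by rewrite thetaS sinDpi IH exprS mulN1r.
Qed.

Lemma tau_gt0 j : 0 < tau j.
Proof. by rewrite /tau divr_gt0 ?expR_gt0. Qed.

Lemma tau_le1 j : tau j <= 1.
Proof.
rewrite /tau ler_pdivrMr ?expR_gt0 // mul1r ler_expR.
by rewrite -expR0 ler_expR theta_ge0.
Qed.

Lemma tauS_lt j : tau j.+1 < tau j.
Proof.
rewrite /tau ltr_pM2l ?expR_gt0 // ltf_pV2 ?posrE ?expR_gt0 // !ltr_expR.
by rewrite thetaS ltrDl pi_gt0.
Qed.

Lemma tau_nonincreasing : {homo tau : i j / (i <= j)%N >-> j <= i}.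
Proof. by apply/nonincreasing_seqP => j; exact/ltW/tauS_lt. Qed.

Lemma exists_tau_lt (e : R) : 0 < e -> exists j, tau j < e.
Proof.
move=> e_gt0; have eN_ge0 : 0 <= expR 1 / e by rewrite divr_ge0 ?expR_ge0 ?ltW.
exists (Num.Def.archi_bound (expR 1 / e)); set N := Num.Def.archi_bound _.
have eN := archi_boundP eN_ge0; rewrite -/N in eN.
rewrite /tau ltr_pdivrMr ?expR_gt0 // -ltr_pdivrMl // mulrC.
apply: (lt_le_trans eN); have N_le_theta : N%:R <= theta N.
  have : N%:R <= N%:R * pi :> R by rewrite ler_peMr //; have := pi_ge2 R; lra.
  by have := pi_gt0 R; rewrite /theta; lra.
apply: (le_trans N_le_theta); apply: (le_trans _ (expR_ge1Dx _)).
by have := expR_ge1Dx (theta N); lra.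
Qed.

End Levels.

Section Oscillation.
Context {R : realType} (a : R -> R).
Hypothesis a0 : a 0 = 0.
Hypothesis a_small : forall t : R, 0 < t <= 1 ->
  a t = sin (ln (ln (expR 1 / t))) / (1 + ln (ln (expR 1 / t))).
Hypothesis a_large : forall t : R, 3 / 2 <= t -> a t = 0.

Lemma norm_a_le1 t : 0 <= t <= 1 -> `|a t| <= 1.
Proof.
move=> /andP[t_ge0 t_le1].
have [->|t_neq0] := eqVneq t 0; first by rewrite a0 normr0.
have t_gt0 : 0 < t by rewrite lt_def t_neq0.
rewrite a_small ?t_gt0 //; set u := ln (ln (expR 1 / t)).
have u_ge0 : 0 <= u.
  apply: ln_ge0; rewrite -[X in X <= _](expRK 1).
  rewrite ler_ln ?posrE ?divr_gt0 ?expR_gt0 //.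
  by rewrite ler_pdivlMr //; apply: ler_piMr; rewrite ?expR_ge0.
rewrite normrM normfV (ger0_norm (x := 1 + u)); last lra.
by rewrite ler_pdivrMr; [have := sin_max u; lra | lra].
Qed.

Lemma a_tau j : a (tau j) = (-1) ^+ j / (1 + theta j).
Proof.
rewrite a_small ?tau_gt0 ?tau_le1 //.
have -> : expR 1 / tau j = expR (expR (theta j)) :> R.
  by rewrite /tau; field; rewrite !gt_eqF ?expR_gt0.
by rewrite !expRK sin_theta.
Qed.

Lemma a_tau_gap j : (1 + pi)^-1 * harmonic j <= `|a (tau j) - a (tau j.+1)|.
Proof.
rewrite !a_tau exprS mulN1r /=.
set A := 1 + theta j; set B := 1 + theta j.+1.
have A_gt0 : 0 < A by rewrite /A; have := @theta_ge0 R j; lra.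
have B_gt0 : 0 < B by rewrite /B; have := @theta_ge0 R j.+1; lra.
have -> : (-1) ^+ j / A - - (-1) ^+ j / B = (-1) ^+ j * (A^-1 + B^-1) by ring.
rewrite normrM normrX normrN1 expr1n mul1r ger0_norm; last first.
  by rewrite addr_ge0 ?invr_ge0 ?ltW.
have A_le : A <= (1 + pi) * j.+1%:R.
  rewrite /A /theta -(natr1 j).
  have := pi_ge2 R; have : 0 <= j%:R :> R by []; lra.
rewrite -invfM; apply: (@le_trans _ _ A^-1); last by rewrite lerDl invr_ge0 ltW.
by rewrite lef_pV2 ?posrE ?mulr_gt0 //; have := pi_gt0 R; lra.
Qed.

Lemma a_comp_not_lipschitz (T : R -> R) (b K M : R) : 0 <= b -> 0 <= K ->
  (forall s s', 0 <= s <= b -> 0 <= s' <= b -> `|T s - T s'| <= K * `|s - s'|) ->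
  T 0 = 0 -> 0 < T b ->
  ~ (forall s s', 0 <= s <= b -> 0 <= s' <= b ->
       `|a (T s) - a (T s')| <= M * `|s - s'|).
Proof.
move=> b_ge0 K_ge0 Tlip T0 Tb aTlip.
have [j0 tau_j0] := exists_tau_lt _ Tb.
have hit j : exists s, (j0 <= j)%N ->
    [/\ 0 <= s <= b, T s = tau j & forall s', 0 <= s' < s -> T s' < tau j].
  have [j0j|] := leqP j0 j; last by exists 0.
  have tau_le_Tb : tau j <= T b.
    exact: ltW (le_lt_trans (@tau_nonincreasing R _ _ j0j) tau_j0).
  have [s hs] := lipschitz_first_hit _ _ _ (tau j) b_ge0 K_ge0 Tlip
    ltac:(by rewrite T0 tau_gt0) tau_le_Tb.
  by exists s.
have [s hs] := choice hit.
have s_nonincr j : (j0 <= j)%N -> s j.+1 <= s j.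
  move=> j0j; have [/andP[sj_ge0 _] Tsj _] := hs j j0j.
  have [_ _ before] := hs j.+1 (leqW j0j).
  rewrite leNgt; apply/negP => sjS; have := before (s j).
  by rewrite sj_ge0 sjS Tsj => /(_ isT); rewrite ltNge (ltW (tauS_lt j)).
apply: (@harmonic_variation_absurd _ s (a \o tau) j0 b M (1 + pi)^-1).
- by rewrite invr_gt0; have := pi_gt0 R; lra.
- by move=> j /hs[].
- move=> j j0j; have [hsj Tsj _] := hs j j0j.
  have [hsj' Tsj' _] := hs j.+1 (leqW j0j).
  rewrite /= -Tsj -Tsj' -[s j - _]ger0_norm ?subr_ge0 ?s_nonincr //.
  exact: aTlip.
- by move=> j _; exact: a_tau_gap.
Qed.

Lemma phi_near_p_dist_lt1 {m : nat} (p y : 'rV[R]_m) :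
  enorm p = 1 -> enorm y = 1 -> enorm (phi_map a p y - p) < 1/2 ->
  enorm (y - p) < 1.
Proof.
move=> np ny near.
set t := enorm (y - p); set c := 1 + a t / 2; set d := dot y p.
have t_ge0 : 0 <= t by exact: enorm_ge0.
have [t_large|t_lt] := lerP (3/2) t.
  move: near; rewrite /phi_map -/t (a_large _ t_large) mul0r addr0 scale1r.
  by rewrite -/t; lra.
have t2 : t ^+ 2 = 2 - 2 * d.
  rewrite /t (enorm_sqr_comb _ 1 (-1) y p); last by move=> i; rewrite !mxE; ring.
  by rewrite ny np -/d; ring.
have z2 : enorm (phi_map a p y - p) ^+ 2 = c ^+ 2 - 2 * c * d + 1.
  rewrite (enorm_sqr_comb _ c (-1) y p); last first.
    by move=> i; rewrite /phi_map !mxE -/t -/c; ring.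
  by rewrite ny np -/d; ring.
have z2_lt : c ^+ 2 - 2 * c * d + 1 < 1/4.
  by rewrite -z2; have := enorm_ge0 (phi_map a p y - p); nra.
have d2 : 3/4 < d ^+ 2 by have := sqr_ge0 (c - d); rewrite sqrrB; lra.
have d_gt : 1/2 < d.
  have : t ^+ 2 < 9/4 by rewrite expr2; nra.
  by rewrite t2 => ?; nra.
by rewrite -(expr_lt1 (n := 2)) //; lra.
Qed.

Lemma phi_near_p {m : nat} (p y : 'rV[R]_m) :
  enorm p = 1 -> enorm y = 1 -> enorm (phi_map a p y - p) < 1/2 ->
  [/\ enorm (phi_map a p y) = 1 + a (enorm (y - p)) / 2,
      1/2 <= enorm (phi_map a p y) & normalize (phi_map a p y) = y].
Proof.
move=> np ny near; have t_lt1 := phi_near_p_dist_lt1 _ _ np ny near.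
have c_ge : 1/2 <= 1 + a (enorm (y - p)) / 2.
  have := norm_a_le1 (enorm (y - p)); rewrite enorm_ge0 ltW // ler_norml.
  by move=> /(_ isT) /andP[]; lra.
have nz : enorm (phi_map a p y) = 1 + a (enorm (y - p)) / 2.
  by rewrite /phi_map enormZ ny mulr1 ger0_norm //; lra.
split; rewrite ?nz //.
by rewrite /normalize nz /phi_map scalerA mulVf ?scale1r // gt_eqF //; lra.
Qed.

Lemma lipschitz_path_from_p_ends_at_p {m : nat} (p : 'rV[R]_m)
    (F : R -> 'rV[R]_m) (M : R) : 0 <= M -> enorm p = 1 ->
  (forall s, 0 <= s <= 1 -> exists2 y, enorm y = 1 & F s = phi_map a p y) ->
  (forall s s', 0 <= s <= 1 -> 0 <= s' <= 1 ->
     enorm (F s - F s') <= M * `|s - s'|) ->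
  F 0 = p -> F 1 = p.
Proof.
move=> M_ge0 np FY Flip F0; apply/eqP/negPn/negP => F1p.
have [s1 [/andP[s1_ge0 s1_le1] Fs1 near]] :=
  lipschitz_path_exit _ _ _ M_ge0 Flip F0 F1p.
have in01 s : 0 <= s <= s1 -> 0 <= s <= 1.
  by move=> /andP[? ?]; apply/andP; split; lra.
pose T s := enorm (normalize (F s) - p).
have nearp s : 0 <= s <= s1 ->
    [/\ enorm (F s) = 1 + a (T s) / 2, 1/2 <= enorm (F s) &
        (F s != p -> 0 < T s)].
  move=> hs; have [y ny Fy] := FY s (in01 s hs).
  have near_y : enorm (phi_map a p y - p) < 1/2 by rewrite -Fy; exact: near.
  have [nz nz_ge ny'] := phi_near_p _ _ np ny near_y.
  have Ty : T s = enorm (y - p) by rewrite /T Fy ny'.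
  split; rewrite ?Fy ?Ty // => Fyp; rewrite lt_def enorm_ge0 andbT.
  apply: contra Fyp => /eqP/enorm_eq0/eqP; rewrite subr_eq0 => /eqP->.
  by rewrite /phi_map subrr enorm0 a0 mul0r addr0 scale1r.
apply: (a_comp_not_lipschitz T s1 (4 * M) (2 * M) s1_ge0).
- by rewrite mulr_ge0.
- move=> s s' hs hs'.
  have [_ nFs _] := nearp s hs; have [_ nFs' _] := nearp s' hs'.
  apply: le_trans (enorm_dist_dist _ _) _; rewrite opprB addrA subrK.
  apply: le_trans (normalize_lipschitz _ _ (1/2) ltac:(lra) nFs nFs') _.
  have -> : 2 / (1/2) = 4 :> R by field.
  rewrite -mulrA; apply: ler_wpM2l => //.
  exact: Flip (in01 s hs) (in01 s' hs').
- by rewrite /T F0 /normalize np invr1 scale1r subrr enorm0.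
- by have [_ _] := nearp s1 ltac:(by rewrite s1_ge0 lexx); apply.
move=> s s' hs hs'.
have [nFs _ _] := nearp s hs; have [nFs' _ _] := nearp s' hs'.
have -> : a (T s) - a (T s') = 2 * (enorm (F s) - enorm (F s')).
  by rewrite nFs nFs'; field.
rewrite normrM ger0_norm // -mulrA ler_wpM2l //.
exact: le_trans (enorm_dist_dist _ _) (Flip _ _ (in01 s hs) (in01 s' hs')).
Qed.

Lemma lipschitz_sphere_map_eq_p {m k : nat} (p : 'rV[R]_m)
    (f : 'rV[R]_k -> 'rV[R]_m) (x0 x1 : 'rV[R]_k) :
  unit_sphere p ->
  (forall x, unit_sphere x -> exists2 y, unit_sphere y & f x = phi_map a p y) ->
  euclid_lipschitz_on unit_sphere f ->
  unit_sphere x0 -> unit_sphere x1 -> x0 + x1 != 0 -> f x0 = p -> f x1 = p.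
Proof.
move=> np fY [L flip] nx0 nx1 x01 fx0.
have [g [K K_ge0 [g0 g1 gS glip]]] := sphere_arc_lipschitz _ _ nx0 nx1 x01.
rewrite -g1.
apply: (lipschitz_path_from_p_ends_at_p p (fun s => f (g s)) (`|L| * K) _ np).
- by rewrite mulr_ge0 ?normr_ge0.
- by move=> s /gS; exact: fY.
- move=> s s' hs hs'; apply: le_trans (flip _ _ (gS s hs) (gS s' hs')) _.
  rewrite -mulrA; apply: le_trans (ler_wpM2r (enorm_ge0 _) (ler_norm L)) _.
  by apply: ler_wpM2l; [exact: normr_ge0 | exact: glip].
- by rewrite g0.
Qed.

End Oscillation.

Theorem lemma3p3 (R : realType) (n k : nat) (p : 'rV[R]_n.+1) (a : R -> R)
  (f : 'rV[R]_k.+1 -> 'rV[R]_n.+1) :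
  (2 <= n)%N ->
  (@unit_sphere R n.+1) p ->
  {within `[0%R, +oo[, continuous a} ->
  smooth_pos a ->
  a 0 = 0 ->
  (forall t : R, 0 < t <= 1 ->
     a t = sin (ln (ln (expR 1 / t))) / (1 + ln (ln (expR 1 / t)))) ->
  (forall t : R, 3 / 2 <= t -> a t = 0) ->
  (1 <= k)%N ->
  (forall x, (@unit_sphere R k.+1) x ->
     exists2 y, (@unit_sphere R n.+1) y & f x = phi_map a p y) ->
  euclid_lipschitz_on ((@unit_sphere R k.+1)) f ->
  (forall x, (@unit_sphere R k.+1) x -> f x = p) \/
  (forall x, (@unit_sphere R k.+1) x -> f x != p).
Proof.
move=> _ np _ _ a0 a_small a_large k_ge1 fY flip.
have eq_p x0 x1 :=
  lipschitz_sphere_map_eq_p _ a0 a_small a_large p f x0 x1 np fY flip.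
have [[x0 nx0 fx0]|no_p] := pselect (exists2 x0, unit_sphere x0 & f x0 = p);
  last by right => x nx; apply/eqP => fx; apply: no_p; exists x.
left => x nx; have [x0Nx|x0x_neq0] := eqVneq (x0 + x) 0; last first.
  exact: eq_p nx0 nx x0x_neq0 fx0.
have [z [nz zx0 zNx0]] := sphere_avoid_pm x0 (k_ge1 : (1 < k.+1)%N).
have fz : f z = p by apply: eq_p nx0 nz _ fx0; rewrite addrC addr_eq0.
apply: eq_p nz nx _ fz; move/eqP: x0Nx; rewrite addrC addr_eq0 => /eqP->.
by rewrite subr_eq0.
Qed.
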